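(* Let $N\ge 1$ be an integer, $\rho,\alpha,q\in[0,1]$, and $(r_n)_{n\ge0}$ with $0\le r_n<1$. Let $Z_n(i)\in[0,1]$ ($i=1,\dots,N$, $n\ge 0$) evolve by $Z_{n+1}(i)=(1-r_n)Z_n(i)+r_n(\rho I_{n+1}(i)+(1-\rho)q)$, where, with $\mathcal F_n=\sigma(Z_k(i):\,1\le i\le N,\ 0\le k\le n)$ and $Z_n=\frac1N\sum_{i=1}^N Z_n(i)$, the $I_{n+1}(1),\dots,I_{n+1}(N)\in\{0,1\}$ are conditionally independent given $\mathcal F_n$ with $P(I_{n+1}(i)=1\mid\mathcal F_n)=(1-\alpha)Z_n(i)+\alpha Z_n$. Suppose $\sum_n r_n=+\infty$, $\sum_n r_n^2<+\infty$ and $\rho(1-\alpha)<1$. Then for every $i\in\{1,\dots,N\}$, $Z_n(i)-Z_n\to0$ almost surely. In particular, if $Z$ is the almost sure limit of $Z_n$, then $Z_n(i)\to Z$ almost surely for every $i$.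
   Context: The paper's standing assumption on the initial condition (permutation invariant law, $E[Z_0(i)]=1/2$, $E[Z_0(1-Z_0)]>0$) may also be imposed but is not needed for this result. *)

From HB Require Import structures.
From mathcomp Require Import all_boot all_order all_algebra.
From mathcomp Require Import all_classical all_reals all_analysis.
Set Implicit Arguments. Unset Strict Implicit. Unset Printing Implicit Defensive.
Import Order.TTheory GRing.Theory Num.Theory.
Import numFieldNormedType.Exports.
Local Open Scope classical_set_scope.
Local Open Scope ring_scope.

Definition zmean (T : Type) (R : realType) (N : nat) (Z : nat -> 'I_N -> T -> R)
  (n : nat) (t : T) : R :=
  (\sum_(i < N) Z n i t) / N%:R.

Definition natural_gens (T : Type) (R : realType) (N : nat)
  (Z : nat -> 'I_N -> T -> R) (n : nat) : set (set T) :=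
  [set A | exists k (i : 'I_N) (B : set R),
      (k <= n)%N /\ measurable B /\ A = Z k i @^-1` B].

Definition natural_filtration (T : Type) (R : realType) (N : nat)
  (Z : nat -> 'I_N -> T -> R) (n : nat) : set (set T) :=
  <<s natural_gens Z n >>.

(* Conditional law of (I_{n+1}(1),...,I_{n+1}(N)) given F_n:
   the I_{n+1}(i) are conditionally independent given F_n with
   P(I_{n+1}(i) = 1 | F_n) = p i (p i being F_n-measurable).
   Stated through the defining property of conditional probability:
   for every A in F_n and every e in {0,1}^N,
     E[1_A 1{I_{n+1} = e}] = E[1_A prod_i (p_i if e_i = 1 else 1 - p_i)]. *)
Definition cond_indep_bernoulli (d : measure_display) (T : measurableType d)
  (R : realType) (P : probability T R) (N : nat)
  (F : set (set T)) (Inext : 'I_N -> T -> R) (p : 'I_N -> T -> R) : Prop :=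
  forall (A : set T) (e : 'I_N -> bool), F A ->
    (\int[P]_(t in A) (\prod_(i < N) ((Inext i t == (e i)%:R)%:R : R))%:E
     = \int[P]_(t in A) (\prod_(i < N) (if e i then p i t else 1 - p i t))%:E)%E.

(* Write D_n = Z_n(i) - Z_n.  Then D_{n+1} = (1 - r_n) D_n + r_n rho X_n with
   X_n = I_{n+1}(i) - (1/N) sum_j I_{n+1}(j), and conditioning on F_n gives
   E[D_n X_n] = (1 - alpha) E[D_n^2].  Hence v_n = E[D_n^2] satisfies
   2 (1 - rho (1 - alpha)) r_n v_n <= v_n - v_{n+1} + 2 r_n^2, so sum_n r_n v_n is
   finite and sum_n r_n D_n^2 < +oo almost surely.  On such a path the steps
   |D_{n+1} - D_n| <= 2 r_n become small while sum_n r_n = +oo forces D_n close to 0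
   again and again; once there, leaving a neighbourhood of 0 would cost a definite
   amount of sum_n r_n D_n^2, so D_n -> 0.
   Conditional expectations are never formed: with p_n(j) = P(I_{n+1}(j) = 1 | F_n),
   the identity E[D_n I_{n+1}(j)] = E[D_n p_n(j)] is obtained by approximating D_n
   by step functions whose level sets lie in F_n. *)

From HB Require Import structures.
From mathcomp Require Import all_boot all_order all_algebra.
From mathcomp Require Import all_classical all_reals all_analysis.
From mathcomp Require Import measurable_realfun zify ring lra.
Import Order.TTheory GRing.Theory Num.Theory.
Import numFieldNormedType.Exports.
Local Open Scope classical_set_scope.
Local Open Scope ring_scope.
Set Implicit Arguments. Unset Strict Implicit. Unset Printing Implicit Defensive.

Lemma sum_ffun_prod_marginal (R : comPzRingType) (I : finType) (F : I -> bool -> R) (j : I) :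
  (forall i, F i true + F i false = 1) ->
  \sum_(e : {ffun I -> bool} | e j) \prod_i F i (e i) = F j true.
Proof.
move=> F1.
pose G i b := if i == j then (if b then F i b else 0) else F i b.
have -> : F j true = \prod_i \sum_(b : bool) G i b.
  rewrite (bigD1 j) //= big_bool /G eqxx /= addr0.
  by rewrite big1 ?mulr1 // => i /negbTE ij; rewrite big_bool /= ij F1.
rewrite bigA_distr_bigA /= big_mkcond /=; apply: eq_bigr => e _.
case: ifPn => ej; last by rewrite (bigD1 j) //= /G eqxx (negbTE ej) mul0r.
by apply: eq_bigr => i _; rewrite /G; case: eqP => // ->; rewrite ej.
Qed.

Lemma sum_mul_eq_indicator (R : pzRingType) (X : eqType) (s : seq X) (c : X -> R) (x : X) :
  uniq s -> x \in s -> \sum_(m <- s) c m * (x == m)%:R = c x.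
Proof.
move=> us xs; rewrite (big_rem x xs) /= eqxx mulr1 big1_seq ?addr0 // => m /andP[_ ms].
have /negbTE -> : x != m by apply: contraTneq ms => <-; rewrite mem_rem_uniqF.
by rewrite mulr0.
Qed.

Lemma norm_le_div_succ_eq0 (R : realType) (x C : R) :
  (forall k : nat, `|x| <= C / k.+1%:R) -> x = 0.
Proof.
move=> xC; apply/normr0_eq0/eqP; rewrite eq_le normr_ge0 andbT leNgt; apply/negP => x0.
have C0 : 0 < C by apply: lt_le_trans x0 _; rewrite -[C]divr1; exact: xC 0%N.
have [k] := @ltr_add_invr R 0 (`|x| / C) (divr_gt0 x0 C0).
rewrite add0r ltr_pdivlMr // mulrC => /(le_lt_trans (xC k)).
by rewrite ltxx.
Qed.

Section bounded_measurable.
Context d (T : measurableType d) (R : realType).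

Definition bounded_measurable (f : T -> R) :=
  measurable_fun setT f /\ exists B : R, forall t, `|f t| <= B.

Lemma bounded_measurable_cst c : bounded_measurable (fun=> c).
Proof. by split; [exact: measurable_cst | exists `|c|]. Qed.

Lemma bounded_measurableD f g :
  bounded_measurable f -> bounded_measurable g -> bounded_measurable (fun t => f t + g t).
Proof.
move=> [mf [B fB]] [mg [C gC]]; split; first exact: measurable_funD.
by exists (B + C) => t; apply: le_trans (ler_normD _ _) (lerD (fB t) (gC t)).
Qed.

Lemma bounded_measurableB f g :
  bounded_measurable f -> bounded_measurable g -> bounded_measurable (fun t => f t - g t).
Proof.
move=> [mf [B fB]] [mg [C gC]]; split; first exact: measurable_funB.
by exists (B + C) => t; apply: le_trans (ler_normB _ _) (lerD (fB t) (gC t)).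
Qed.

Lemma bounded_measurableM f g :
  bounded_measurable f -> bounded_measurable g -> bounded_measurable (fun t => f t * g t).
Proof.
move=> [mf [B fB]] [mg [C gC]]; split; first exact: measurable_funM.
by exists (B * C) => t; rewrite normrM; apply: ler_pM.
Qed.

Lemma bounded_measurable_sum (I : Type) (s : seq I) (F : I -> T -> R) :
  (forall i, bounded_measurable (F i)) -> bounded_measurable (fun t => \sum_(i <- s) F i t).
Proof.
move=> bF; elim: s => [|a s ih].
  by under eq_fun do rewrite big_nil; exact: bounded_measurable_cst.
by under eq_fun do rewrite big_cons; exact: bounded_measurableD.
Qed.

Lemma bounded_measurable_norm f : bounded_measurable f -> bounded_measurable (fun t => `|f t|).
Proof.
move=> [mf [B fB]]; split; first exact: measurableT_comp.
by exists B => t; rewrite normr_id.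
Qed.

Lemma bounded_measurable_bool (b : T -> bool) :
  measurable_fun setT b -> bounded_measurable (fun t => (b t)%:R).
Proof.
move=> mb; split; last by exists 1 => t; case: (b t); rewrite ?normr1 ?normr0.
rewrite (_ : (fun t => _) = \1_(b @^-1` [set true])); last first.
  apply/funext => t; rewrite indicE.
  by have [bt|bt] := boolP (b t); [rewrite mem_set | rewrite memNset //= (negbTE bt)].
apply: (@measurable_indic _ _ _ setT); rewrite -[X in measurable X]setTI; exact: mb.
Qed.

Lemma bounded_measurable_unit (f : T -> R) :
  measurable_fun setT f -> (forall t, 0 <= f t <= 1) -> bounded_measurable f.
Proof.
move=> mf f01; split => //; exists 1 => t.
by have /andP[f0 f1] := f01 t; rewrite ger0_norm.
Qed.

Variable P : probability T R.

Lemma bounded_measurable_integrable f :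
  bounded_measurable f -> P.-integrable setT (EFin \o f).
Proof.
move=> [mf [B fB]]; apply: measurable_bounded_integrable => //.
  by rewrite ltey_eq fin_num_measure.
rewrite /bounded_near; near=> M => t _ /=; apply: le_trans (fB t) _.
by near: M; apply: nbhs_pinfty_ge; exact: num_real.
Unshelve. all: end_near. Qed.

Lemma Rintegral_cst_probability c : \int[P]_t c = c.
Proof.
rewrite Rintegral_cst // [fine _](_ : _ = 1) ?mulr1 //.
by rewrite -[RHS]/(fine 1%E); congr fine; exact: probability_setT.
Qed.

Lemma Rintegral_sum_bounded (I : Type) (s : seq I) (F : I -> T -> R) :
  (forall i, bounded_measurable (F i)) ->
  \int[P]_t (\sum_(i <- s) F i t) = \sum_(i <- s) \int[P]_t F i t.
Proof.
move=> bF; elim: s => [|a s ih].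
  by under eq_Rintegral do rewrite big_nil; rewrite big_nil Rintegral_cst_probability.
under eq_Rintegral do rewrite big_cons.
rewrite big_cons RintegralD ?ih //; apply: bounded_measurable_integrable => //.
exact: bounded_measurable_sum.
Qed.

Lemma norm_Rintegral_le_bound f B : bounded_measurable f -> (forall t, `|f t| <= B) ->
  `|\int[P]_t f t| <= B.
Proof.
have integ := bounded_measurable_integrable.
move=> bf fB; apply: le_trans (le_normr_Rintegral _ (integ _ bf)) _ => //.
rewrite -[leRHS](Rintegral_cst_probability B); apply: le_Rintegral => //.
- exact/integ/bounded_measurable_norm.
- exact/integ/bounded_measurable_cst.
Qed.

Lemma Rintegral_mul_sub_mean (N : nat) (g : T -> R) (u : 'I_N -> T -> R) (i : 'I_N) :
  bounded_measurable g -> (forall j, bounded_measurable (u j)) ->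
  \int[P]_t (g t * (u i t - (\sum_(j < N) u j t) / N%:R)) =
  \int[P]_t (g t * u i t) - (\sum_(j < N) \int[P]_t (g t * u j t)) / N%:R.
Proof.
have integ := bounded_measurable_integrable.
move=> bg bu; have bgu j : bounded_measurable (fun t => g t * u j t).
  exact: bounded_measurableM.
rewrite -Rintegral_sum_bounded // mulrC -RintegralZl //; last first.
  exact/integ/bounded_measurable_sum.
rewrite -RintegralB //; first last.
- exact/integ/bounded_measurableM/bounded_measurable_sum/bgu/bounded_measurable_cst.
- exact: integ.
apply: eq_Rintegral => t _; rewrite mulrBr mulr_sumr; congr (_ - _).
by rewrite -!mulr_sumr; ring.
Qed.

End bounded_measurable.

Definition floor_levels (k : nat) : seq int :=
  [seq i%:Z - k.+1%:Z | i <- iota 0 (2 * k.+1).+1].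

Lemma floor_levels_uniq k : uniq (floor_levels k).
Proof.
rewrite map_inj_uniq ?iota_uniq // => i j /eqP.
by rewrite subr_eq addrNK => /eqP [].
Qed.

Lemma mem_floor_levels (R : realType) k (x : R) : `|x| <= 1 ->
  Num.floor (k.+1%:R * x) \in floor_levels k.
Proof.
rewrite ler_norml => /andP[x_ge x_le].
set z := Num.floor _.
have z_le : z <= k.+1%:Z.
  rewrite -(ler_int R); apply: le_trans (Num.Theory.floor_le _) _.
  by rewrite ler_piMr.
have z_ge : - k.+1%:Z <= z.
  rewrite -ltzD1 -(ltr_int R); apply: le_lt_trans (Num.Theory.floorD1_gt _).
  by rewrite rmorphN /= -mulrN1 ler_pM2l.
apply/mapP; exists (absz (z + k.+1%:Z)); last lia.
by rewrite mem_iota add0n; apply/andP; split => //; lia.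
Qed.

Lemma floor_div_levels (R : realType) k (x : R) : `|x| <= 1 ->
  (Num.floor (k.+1%:R * x))%:~R / k.+1%:R =
  \sum_(m <- floor_levels k) (m%:~R / k.+1%:R : R) * (Num.floor (k.+1%:R * x) == m)%:R.
Proof.
move=> x1; rewrite (sum_mul_eq_indicator (fun m : int => m%:~R / k.+1%:R : R)) //.
- exact: floor_levels_uniq.
- exact: mem_floor_levels.
Qed.

Lemma norm_sub_floor_div (R : realType) (K x : R) : 0 < K ->
  `|x - (Num.floor (K * x))%:~R / K| <= K^-1.
Proof.
move=> K0; rewrite (_ : x - _ = (K * x - (Num.floor (K * x))%:~R) / K); last first.
  by field; rewrite gt_eqF.
rewrite normrM [`|K^-1|]ger0_norm ?invr_ge0 ?(ltW K0) //.
rewrite ger0_norm; last by rewrite subr_ge0 Num.Theory.floor_le.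
rewrite -[leRHS]mul1r ler_pM2r ?invr_gt0 // lerBlDr addrC.
by apply: ltW; rewrite -intrD1; exact: Num.Theory.floorD1_gt.
Qed.

Section level_set_approximation.
Context d (T : measurableType d) (R : realType) (P : probability T R).

Lemma measurable_floor_level (g : T -> R) (K : R) (m : int) : measurable_fun setT g ->
  measurable_fun setT (fun t => Num.floor (K * g t) == m).
Proof.
move=> mg; rewrite (_ : (fun t => _) =
  (fun t => (m%:~R <= K * g t) && (K * g t < (m + 1)%:~R))); last first.
  by apply/funext => t; rewrite Num.Theory.floor_eq.
have mKg : measurable_fun setT (fun t => K * g t) by apply: measurable_funM.
apply: measurable_and; first exact: measurable_fun_ler.
exact: measurable_fun_ltr.
Qed.

Lemma Rintegral_mul_eq_of_levels (g f h : T -> R) :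
  measurable_fun setT g -> (forall t, `|g t| <= 1) ->
  bounded_measurable f -> bounded_measurable h ->
  (forall (K : R) (m : int),
     \int[P]_t ((Num.floor (K * g t) == m)%:R * f t) =
     \int[P]_t ((Num.floor (K * g t) == m)%:R * h t)) ->
  \int[P]_t (g t * f t) = \int[P]_t (g t * h t).
Proof.
move=> mg g1 bf bh eq_levels; have [_ [Bf fB]] := bf; have [_ [Bh hB]] := bh.
have bg : bounded_measurable g by split => //; exists 1.
have integ := bounded_measurable_integrable P.
apply/eqP; rewrite -subr_eq0; apply/eqP.
apply: (@norm_le_div_succ_eq0 _ _ (Bf + Bh)) => k; set K : R := k.+1%:R.
pose gk t := (Num.floor (K * g t))%:~R / K.
pose level m t : R := (Num.floor (K * g t) == m)%:R.
have blevel m : bounded_measurable (level m).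
  exact/bounded_measurable_bool/measurable_floor_level.
have gkE t : gk t = \sum_(m <- floor_levels k) m%:~R / K * level m t.
  exact: floor_div_levels.
have bgk : bounded_measurable gk.
  rewrite (funext gkE); apply: bounded_measurable_sum => m.
  exact/bounded_measurableM/blevel/bounded_measurable_cst.
have int_gk (u : T -> R) : bounded_measurable u -> \int[P]_t (gk t * u t) =
    \sum_(m <- floor_levels k) m%:~R / K * \int[P]_t (level m t * u t).
  move=> bu; under eq_Rintegral do rewrite gkE mulr_suml.
  rewrite Rintegral_sum_bounded => [|m]; last first.
    exact/bounded_measurableM/bu/bounded_measurableM/blevel/bounded_measurable_cst.
  apply: eq_bigr => m _; under eq_Rintegral do rewrite -mulrA.
  by rewrite RintegralZl //; apply/integ/bounded_measurableM.
have split_gk (u : T -> R) : bounded_measurable u -> \int[P]_t (g t * u t) =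
    \int[P]_t ((g t - gk t) * u t) + \int[P]_t (gk t * u t).
  move=> bu; rewrite -RintegralD //; last 2 first.
  - exact/integ/bounded_measurableM/bu/bounded_measurableB.
  - exact/integ/bounded_measurableM.
  by apply: eq_Rintegral => t _; rewrite -mulrDl subrK.
have err (u : T -> R) B : bounded_measurable u -> (forall t, `|u t| <= B) ->
    `|\int[P]_t ((g t - gk t) * u t)| <= B / K.
  move=> bu uB; apply: norm_Rintegral_le_bound.
    exact/bounded_measurableM/bu/bounded_measurableB.
  move=> t; rewrite normrM mulrC; apply: ler_pM => //.
  exact: norm_sub_floor_div.
have same_steps : \int[P]_t (gk t * f t) = \int[P]_t (gk t * h t).
  by rewrite !int_gk //; apply: eq_bigr => m _; rewrite eq_levels.
rewrite (split_gk _ bf) (split_gk _ bh) same_steps opprD addrACA subrr addr0 mulrDl.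
by apply: le_trans (ler_normB _ _) _; apply: lerD; [exact: err | exact: err].
Qed.

End level_set_approximation.

Section conditional_bernoulli.
Context d (T : measurableType d) (R : realType) (P : probability T R).

Lemma Rintegral_in_indicator (A : set T) (f : T -> R) :
  \int[P]_(t in A) f t = \int[P]_t ((t \in A)%:R * f t).
Proof.
rewrite Rintegral_mkcond; apply: eq_Rintegral => t _.
by rewrite patchE; case: (t \in A); rewrite ?mul1r ?mul0r.
Qed.

Lemma cond_indep_bernoulli_marginal (N : nat) (F : set (set T)) (I p : 'I_N -> T -> R) :
  F `<=` measurable ->
  (forall i, measurable_fun setT (I i)) -> (forall i, measurable_fun setT (p i)) ->
  (forall i t, I i t = 0 \/ I i t = 1) -> (forall i t, 0 <= p i t <= 1) ->
  cond_indep_bernoulli P F I p ->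
  forall A j, F A -> \int[P]_(t in A) I j t = \int[P]_(t in A) p j t.
Proof.
move=> FM mI mp I01 p01 indep A j FA; have mA := FM A FA.
pose FI t i (b : bool) : R := (I i t == b%:R)%:R.
pose Fp t i (b : bool) : R := if b then p i t else 1 - p i t.
have FI1 t i : FI t i true + FI t i false = 1.
  rewrite /FI; case: (I01 i t) => ->;
  by rewrite ?eqxx ?oner_eq0 ?(eq_sym 0) ?oner_eq0 /= ?addr0 ?add0r.
have Fp1 t i : Fp t i true + Fp t i false = 1 by rewrite /Fp subrKC.
have mprod (G : T -> 'I_N -> bool -> R) (e : {ffun 'I_N -> bool}) :
    (forall i, measurable_fun setT (fun t => G t i (e i))) ->
    measurable_fun A (fun t => (\prod_(i < N) G t i (e i))%:E).
  move=> mG; apply/measurable_EFinP; apply: measurable_prod => i _.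
  exact: measurable_funS measurableT (subsetT _) (mG i).
have mFI (e : {ffun 'I_N -> bool}) :
    measurable_fun A (fun t => (\prod_(i < N) FI t i (e i))%:E).
  apply: mprod => i; have mIe := measurable_fun_eqr (mI i) (measurable_cst ((e i)%:R : R)).
  by have [] := bounded_measurable_bool R mIe.
have mFp (e : {ffun 'I_N -> bool}) :
    measurable_fun A (fun t => (\prod_(i < N) Fp t i (e i))%:E).
  by apply: mprod => i; rewrite /Fp; case: (e i) => //; exact: measurable_funB.
rewrite /Rintegral; congr fine.
(* Sum the defining identity over the patterns e with e j = true. *)
transitivity (\int[P]_(t in A)
    (\sum_(e : {ffun 'I_N -> bool} | e j) \prod_(i < N) FI t i (e i))%:E)%E.
  apply: eq_integral => t _; rewrite sum_ffun_prod_marginal //; congr EFin.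
  by rewrite /FI; case: (I01 j t) => ->; rewrite ?eqxx ?oner_eq0 ?(eq_sym 0) ?oner_eq0.
transitivity (\int[P]_(t in A)
    (\sum_(e : {ffun 'I_N -> bool} | e j) \prod_(i < N) Fp t i (e i))%:E)%E; last first.
  by apply: eq_integral => t _; rewrite sum_ffun_prod_marginal.
under eq_integral do rewrite -sumEFin -big_filter.
under [in RHS]eq_integral do rewrite -sumEFin -big_filter.
rewrite !ge0_integral_sum //; last 2 first.
- move=> e t _; rewrite lee_fin; apply: prodr_ge0 => i _; rewrite /Fp.
  by case: (e i); case/andP: (p01 i t) => // _; rewrite subr_ge0.
- by move=> e t _; rewrite lee_fin; apply: prodr_ge0 => i _; rewrite /FI ler0n.
by apply: eq_bigr => e _; exact: indep.
Qed.

End conditional_bernoulli.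

Section small_steps.
Context (R : realType).
Implicit Types (a r x : nat -> R).

Lemma nneseries_tail_le a : (forall n, 0 <= a n) ->
  (\sum_(0 <= n <oo) (a n)%:E < +oo)%E ->
  forall e, 0 < e -> exists M, forall m, \sum_(M <= k < m) a k <= e.
Proof.
move=> a0 afin e e0.
have := @nneseries_tail_cvg R (fun k => (a k)%:E) xpredT afin.
move=> /(_ (fun k _ => a0 k)) /fine_cvgP [finN /cvgr0Pnorm_lt /(_ e e0)] hN.
near \oo => M; exists M => m.
have fin_tail : (\sum_(M <= k <oo) (a k)%:E)%E \is a fin_num by near: M.
have small_tail : `|fine (\sum_(M <= k <oo) (a k)%:E)%E| < e by near: M.
rewrite -lee_fin -sumEFin; apply: le_trans (nneseries_lim_ge _ _) _.
  by move=> n _ _; rewrite lee_fin.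
rewrite -(fineK fin_tail) lee_fin; apply/ltW/(le_lt_trans _ small_tail); exact: ler_norm.
Unshelve. all: end_near. Qed.

Lemma nneseries_tail_unbounded a : (forall n, 0 <= a n) ->
  (\sum_(0 <= n <oo) (a n)%:E = +oo)%E ->
  forall M B, exists m, B < \sum_(M <= k < m) a k.
Proof.
move=> a0 ainf M B; apply/not_existsP => hB.
have tail_le : (\sum_(M <= k <oo) (a k)%:E <= B%:E)%E.
  apply: lime_le; first by apply: is_cvg_nneseries => n _ _; rewrite lee_fin.
  by apply: nearW => m; rewrite sumEFin lee_fin leNgt; exact/negP/hB.
move: ainf; rewrite (@nneseries_split R _ 0 M) /=; last by move=> k _; rewrite lee_fin.
rewrite add0n sumEFin => /eqP; apply/negP.
rewrite -(@fineK _ (\sum_(M <= k <oo) (a k)%:E)%E) -?EFinD //.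
rewrite ge0_fin_numE; first exact: le_lt_trans tail_le (ltry _).
by apply: nneseries_ge0 => n _ _; rewrite lee_fin.
Qed.

Lemma sum_le_fine_nneseries a : (forall n, 0 <= a n) ->
  (\sum_(0 <= n <oo) (a n)%:E < +oo)%E ->
  forall m, \sum_(0 <= n < m) a n <= fine (\sum_(0 <= n <oo) (a n)%:E)%E.
Proof.
move=> a0 afin m; have a0E n : (0 <= (a n)%:E)%E by rewrite lee_fin.
rewrite -lee_fin -sumEFin fineK; last by rewrite ge0_fin_numE // nneseries_ge0.
exact: nneseries_lim_ge.
Qed.

Lemma ler_sum_suffix a (M M' m : nat) : (forall n, 0 <= a n) -> (M <= M')%N ->
  \sum_(M' <= k < m) a k <= \sum_(M <= k < m) a k.
Proof.
move=> a0 MM'; have [mM'|M'm] := leqP m M'.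
  by rewrite big_geq // sumr_ge0.
rewrite [leRHS](@big_cat_nat _ _ _ M') //= ?(ltnW M'm) // lerDr.
exact: sumr_ge0.
Qed.

Lemma sqr_le_of_norm_le (b y : R) : 0 <= b -> b <= `|y| -> b ^+ 2 <= y ^+ 2.
Proof.
by move=> b0 by_; rewrite -[y ^+ 2]real_normK ?num_real //; apply: lerXn2r; rewrite ?nnegrE.
Qed.

Lemma exists_norm_lt_late r x : (forall n, 0 <= r n) ->
  (\sum_(0 <= n <oo) (r n)%:E = +oo)%E ->
  (\sum_(0 <= n <oo) (r n * x n ^+ 2)%:E < +oo)%E ->
  forall M (b : R), 0 < b -> exists2 k, (M <= k)%N & `|x k| < b.
Proof.
move=> r0 rinf rxfin M b b0.
have rx0 n : 0 <= r n * x n ^+ 2 by rewrite mulr_ge0 ?sqr_ge0.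
have [M1 HM1] := nneseries_tail_le rx0 rxfin ltr01.
have [//|none] := pselect (exists2 k, (M <= k)%N & `|x k| < b).
have r_le k : (M <= k)%N -> r k <= b ^-2 * (r k * x k ^+ 2).
  move=> Mk; have bx : b <= `|x k| by rewrite leNgt; apply/negP => xb; apply: none; exists k.
  rewrite mulrCA -[leLHS]mulr1 ler_wpM2l // ler_pdivlMl ?exprn_gt0 // mulr1.
  exact: sqr_le_of_norm_le (ltW b0) bx.
have [m lt_m] := nneseries_tail_unbounded r0 rinf (maxn M M1) (b ^- 2).
suff : \sum_(maxn M M1 <= k < m) r k <= b ^- 2 by rewrite leNgt lt_m.
apply: le_trans (_ : \sum_(maxn M M1 <= k < m) b ^-2 * (r k * x k ^+ 2) <= _).
  rewrite !big_nat; apply: ler_sum => k /andP[Mk _].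
  by apply: r_le; exact: leq_trans (leq_maxl _ _) Mk.
rewrite -mulr_sumr -[leRHS]mulr1 ler_wpM2l ?invr_ge0 ?exprn_ge0 ?(ltW b0) //.
by apply: le_trans (HM1 m); apply: ler_sum_suffix => //; exact: leq_maxr.
Qed.

Lemma norm_le_after_small_start r x (b : R) k0 :
  (forall n, 0 <= r n) -> (forall n, `|x n.+1 - x n| <= 2 * r n) -> 0 < b ->
  `|x k0| < b -> (forall k, (k0 <= k)%N -> r k <= b / 4) ->
  forall n, (k0 <= n)%N ->
  `|x n| <= 3 * b / 2 + 2 / b ^+ 2 * \sum_(k0 <= k < n) r k * x k ^+ 2.
Proof.
move=> r0 dx b0 xk0 r_small n /subnKC <-; elim: (n - k0)%N => [|j ih].
  by rewrite addn0 big_geq // mulr0 addr0; apply/ltW/(lt_le_trans xk0); lra.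
rewrite addnS big_nat_recr ?leq_addr //=; set k := (k0 + j)%N in ih *.
set S := \sum_(k0 <= i < k) r i * x i ^+ 2 in ih *.
have c0 : 0 <= 2 / b ^+ 2 by rewrite divr_ge0 ?exprn_ge0 ?(ltW b0).
have S0 : 0 <= 2 / b ^+ 2 * S.
  by rewrite mulr_ge0 ?sumr_ge0 // => i _; rewrite mulr_ge0 ?sqr_ge0.
have rxk0 : 0 <= 2 / b ^+ 2 * (r k * x k ^+ 2) by rewrite mulr_ge0 // mulr_ge0 ?sqr_ge0.
have step : `|x k.+1| <= `|x k| + 2 * r k.
  rewrite -[x k.+1](subrK (x k)) addrC; apply: le_trans (ler_normD _ _) _.
  by rewrite lerD2l.
have rk := r_small k (leq_addr _ _); apply: le_trans step _; rewrite mulrDr.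
have [xb|bx] := ltP `|x k| b; first lra.
(* Away from 0, the step 2 r_k is paid for by the increment of the weighted sum. *)
suff : 2 * r k <= 2 / b ^+ 2 * (r k * x k ^+ 2) by lra.
rewrite [leRHS](_ : _ = 2 * r k * (x k ^+ 2 / b ^+ 2)); last by ring.
rewrite -[leLHS]mulr1 ler_wpM2l ?mulr_ge0 // ler_pdivlMr ?exprn_gt0 // mul1r.
exact: sqr_le_of_norm_le (ltW b0) bx.
Qed.

Lemma cvg0_of_small_steps r x : (forall n, 0 <= r n) ->
  (\sum_(0 <= n <oo) (r n)%:E = +oo)%E ->
  (\sum_(0 <= n <oo) (r n ^+ 2)%:E < +oo)%E ->
  (forall n, `|x n.+1 - x n| <= 2 * r n) ->
  (\sum_(0 <= n <oo) (r n * x n ^+ 2)%:E < +oo)%E ->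
  x @ \oo --> 0.
Proof.
move=> r0 rinf r2fin dx rxfin; apply/cvgr0Pnorm_lt => e e0.
have [b b0 eb] : exists2 b : R, 0 < b & e = 2 * b.
  by exists (e / 2); [rewrite divr_gt0 | rewrite mulrC divfK ?pnatr_eq0].
have rx0 n : 0 <= r n * x n ^+ 2 by rewrite mulr_ge0 ?sqr_ge0.
have [M1 HM1] : exists M, forall m, \sum_(M <= k < m) r k * x k ^+ 2 <= b ^+ 3 / 8.
  by apply: nneseries_tail_le => //; rewrite divr_gt0 ?exprn_gt0.
have [M2 HM2] : exists M, forall m, \sum_(M <= k < m) r k ^+ 2 <= (b / 4) ^+ 2.
  by apply: nneseries_tail_le => // [n|]; rewrite ?sqr_ge0 ?exprn_gt0 ?divr_gt0.
have r_small k : (maxn M1 M2 <= k)%N -> r k <= b / 4.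
  move=> Mk; rewrite -(@ler_pXn2r _ 2) ?nnegrE ?r0 ?divr_ge0 ?(ltW b0) //.
  apply: le_trans (HM2 k.+1); rewrite big_nat_recr ?(leq_trans (leq_maxr _ _) Mk) //=.
  by rewrite lerDr sumr_ge0 // => i _; exact: sqr_ge0.
have [k0 Mk0 xk0] := exists_norm_lt_late r0 rinf rxfin (maxn M1 M2) b0.
near=> n; have k0n : (k0 <= n)%N by near: n; exists k0.
have := norm_le_after_small_start r0 dx b0 xk0 _ k0n.
move=> /(_ (fun k k0k => r_small k (leq_trans Mk0 k0k))) xn.
have tail_small : \sum_(k0 <= k < n) r k * x k ^+ 2 <= b ^+ 3 / 8.
  apply: le_trans (HM1 n); apply: ler_sum_suffix => //.
  exact: leq_trans (leq_maxl _ _) Mk0.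
have : 2 / b ^+ 2 * \sum_(k0 <= k < n) r k * x k ^+ 2 <= b / 4.
  apply: le_trans (ler_wpM2l _ tail_small) _; first by rewrite divr_ge0 ?exprn_ge0 ?(ltW b0).
  by rewrite (_ : 2 / b ^+ 2 * (b ^+ 3 / 8) = b / 4) //; field; rewrite gt_eqF.
rewrite eb => h; lra.
Unshelve. all: end_near.
Qed.

End small_steps.

Section summable_expectations.
Context d (T : measurableType d) (R : realType) (P : probability T R).

Lemma ae_nneseries_lt_pinfty (a : nat -> T -> R) :
  (forall n t, 0 <= a n t) -> (forall n, bounded_measurable (a n)) ->
  (exists C, forall m, \sum_(0 <= n < m) \int[P]_t a n t <= C) ->
  {ae P, forall t, (\sum_(0 <= n <oo) (a n t)%:E < +oo)%E}.
Proof.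
move=> a0 ba [C hC].
pose f t := (\sum_(0 <= n <oo) (a n t)%:E)%E.
have f0 t : (0 <= f t)%E by apply: nneseries_ge0 => n _ _; rewrite lee_fin.
have ma n : measurable_fun setT (EFin \o a n) by apply/measurable_EFinP; exact: (ba n).1.
have mf : measurable_fun setT f.
  apply: (@ge0_emeasurable_sum _ _ _ setT (fun n t => (a n t)%:E) xpredT) => //.
  - by move=> k t _ _; rewrite lee_fin.
  - by move=> k _; exact: ma.
have int_f : (\int[P]_t f t <= C%:E)%E.
  rewrite integral_nneseries // => [|n t _]; last by rewrite lee_fin.
  apply: lime_le.
    by apply: is_cvg_nneseries => n _ _; apply: integral_ge0 => t _; rewrite lee_fin.
  apply: nearW => m; rewrite (eq_bigr (fun n => (\int[P]_t a n t)%:E)).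
    by rewrite sumEFin lee_fin.
  move=> n _; rewrite /Rintegral fineK //; apply: integrable_fin_num => //.
  exact: bounded_measurable_integrable.
have f_int : P.-integrable setT f.
  apply/integrableP; split; first exact: mf.
  under eq_integral do rewrite gee0_abs //.
  exact: le_lt_trans int_f (ltry _).
apply: filterS (integrable_ae measurableT f_int) => t /(_ I).
by rewrite ge0_fin_numE.
Qed.

End summable_expectations.

Lemma norm_sub_le1 (R : realDomainType) (a b : R) : 0 <= a <= 1 -> 0 <= b <= 1 -> `|a - b| <= 1.
Proof. by move=> /andP[? ?] /andP[? ?]; rewrite ler_norml; apply/andP; split; lra. Qed.

Lemma sqr_le1 (R : realDomainType) (x : R) : `|x| <= 1 -> x ^+ 2 <= 1.
Proof. by move=> x1; rewrite -real_normK ?num_real // expr_le1. Qed.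

Lemma zmean_ge0_le1 (T : Type) (R : realType) (N : nat) (Z : nat -> 'I_N -> T -> R) n t :
  (0 < N)%N -> (forall i, 0 <= Z n i t <= 1) -> 0 <= zmean Z n t <= 1.
Proof.
move=> N0 Z01; apply/andP; split.
  by apply: divr_ge0 => //; apply: sumr_ge0 => i _; case/andP: (Z01 i).
rewrite /zmean ler_pdivrMr ?ltr0n // mul1r.
apply: le_trans (ler_sum _ (fun i _ => (andP (Z01 i)).2)) _.
by rewrite sumr_const card_ord.
Qed.

Lemma measurable_zmean d (T : measurableType d) (R : realType) (N : nat)
    (Z : nat -> 'I_N -> T -> R) n :
  (forall i, measurable_fun setT (Z n i)) -> measurable_fun setT (zmean Z n).
Proof.
move=> mZ; apply: measurable_funM; last exact: measurable_cst.
by apply: measurable_sum => i; exact: mZ.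
Qed.

Section mean_field_model.
Context d (T : measurableType d) (R : realType) (P : probability T R).
Variables (N : nat) (rho alpha q : R) (r : nat -> R) (Z I : nat -> 'I_N -> T -> R).
Hypotheses (N_gt0 : (0 < N)%N) (rho01 : 0 <= rho <= 1) (alpha01 : 0 <= alpha <= 1)
  (r_ge0 : forall n, 0 <= r n)
  (mZ : forall n i, measurable_fun setT (Z n i))
  (mI : forall n i, measurable_fun setT (I n i))
  (Z01 : forall n i t, 0 <= Z n i t <= 1)
  (I01 : forall n i t, I n i t = 0 \/ I n i t = 1)
  (Z_rec : forall n i t,
     Z n.+1 i t = (1 - r n) * Z n i t + r n * (rho * I n.+1 i t + (1 - rho) * q))
  (I_cond : forall n, cond_indep_bernoulli P (natural_filtration Z n) (I n.+1)
     (fun i t => (1 - alpha) * Z n i t + alpha * zmean Z n t)).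

Definition deviation n i t := Z n i t - zmean Z n t.
Definition innovation n i t := I n.+1 i t - zmean I n.+1 t.
Definition success_prob n i t := (1 - alpha) * Z n i t + alpha * zmean Z n t.

Lemma I_ge0_le1 n i t : 0 <= I n i t <= 1.
Proof. by case: (I01 n i t) => ->; rewrite ?lexx ?ler01. Qed.

Lemma norm_deviation_le1 n i t : `|deviation n i t| <= 1.
Proof. by apply: norm_sub_le1 => //; exact: zmean_ge0_le1. Qed.

Lemma norm_innovation_le1 n i t : `|innovation n i t| <= 1.
Proof.
apply: norm_sub_le1; first exact: I_ge0_le1.
by apply: zmean_ge0_le1 => // j; exact: I_ge0_le1.
Qed.

Lemma success_prob_ge0_le1 n i t : 0 <= success_prob n i t <= 1.
Proof.
have /andP[z0 z1] := Z01 n i t; have /andP[m0 m1] := zmean_ge0_le1 N_gt0 (fun j => Z01 n j t).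
have /andP[a0 a1] := alpha01; rewrite /success_prob; apply/andP; split; first nra.
suff : (1 - alpha) * Z n i t + alpha * zmean Z n t <= (1 - alpha) * 1 + alpha * 1 by lra.
by apply: lerD; apply: ler_wpM2l; rewrite ?subr_ge0.
Qed.

Lemma bounded_measurable_deviation n i : bounded_measurable (deviation n i).
Proof.
split; last by exists 1; exact: norm_deviation_le1.
by apply: measurable_funB => //; exact: measurable_zmean.
Qed.

Lemma bounded_measurable_I n i : bounded_measurable (I n i).
Proof. exact: bounded_measurable_unit (mI n i) (I_ge0_le1 n i). Qed.

Lemma bounded_measurable_sq_deviation n i :
  bounded_measurable (fun t => deviation n i t ^+ 2).
Proof.
exact: bounded_measurableM (bounded_measurable_deviation n i) (bounded_measurable_deviation n i).
Qed.

Lemma bounded_measurable_innovation n i : bounded_measurable (innovation n i).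
Proof.
split; last by exists 1; exact: norm_innovation_le1.
by apply: measurable_funB => //; exact: measurable_zmean.
Qed.

Lemma bounded_measurable_success_prob n i : bounded_measurable (success_prob n i).
Proof.
apply: bounded_measurable_unit; last exact: success_prob_ge0_le1.
by apply: measurable_funD; apply: measurable_funM => //; exact: measurable_zmean.
Qed.

Lemma zmean_rec n t : zmean Z n.+1 t =
  (1 - r n) * zmean Z n t + r n * (rho * zmean I n.+1 t + (1 - rho) * q).
Proof.
rewrite /zmean (eq_bigr _ (fun j _ => Z_rec n j t)) big_split /= -!mulr_sumr big_split /=.
rewrite -mulr_sumr sumr_const card_ord -mulr_natr; field.
by rewrite pnatr_eq0 -lt0n.
Qed.

Lemma deviation_rec n i t :
  deviation n.+1 i t = (1 - r n) * deviation n i t + r n * rho * innovation n i t.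
Proof. by rewrite /deviation /innovation Z_rec zmean_rec; ring. Qed.

Lemma norm_rho_innovation_le1 n i t : `|rho * innovation n i t| <= 1.
Proof.
rewrite normrM -[1]mul1r; apply: ler_pM => //; last exact: norm_innovation_le1.
by case/andP: rho01 => rho0 rho1; rewrite ger0_norm.
Qed.

Lemma norm_deviation_step n i t : `|deviation n.+1 i t - deviation n i t| <= 2 * r n.
Proof.
rewrite deviation_rec (_ : _ - _ = r n * (rho * innovation n i t - deviation n i t)); last by ring.
rewrite normrM ger0_norm // mulrC ler_wpM2r //.
apply: le_trans (ler_normB _ _) _; apply: lerD.
- exact: norm_rho_innovation_le1.
- exact: norm_deviation_le1.
Qed.

Lemma natural_filtration_measurable n : natural_filtration Z n `<=` measurable.
Proof.
apply: smallest_sub; first exact: sigma_algebra_measurable.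
move=> _ [k [j [B [_ [mB ->]]]]]; rewrite -[X in measurable X]setTI.
exact: mZ.
Qed.

Lemma natural_filtration_deviation_level n i (K : R) (m : int) :
  natural_filtration Z n [set t | Num.floor (K * deviation n i t) == m].
Proof.
pose Tn := g_sigma_algebraType (natural_gens Z n).
have mZn j : measurable_fun (setT : set Tn) (Z n j : Tn -> R).
  move=> _ B mB; rewrite setTI; apply: sub_sigma_algebra.
  by exists n, j, B.
have mdev : measurable_fun (setT : set Tn) (deviation n i : Tn -> R).
  by apply: measurable_funB => //; exact: measurable_zmean.
have := measurable_floor_level K m mdev measurableT (Y := [set true]) Logic.I.
by rewrite setTI.
Qed.

(* D_n is F_n-measurable, so its level sets are events on which [I_cond] can be tested. *)
Lemma Rintegral_deviation_mul_I n i j :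
  \int[P]_t (deviation n i t * I n.+1 j t) = \int[P]_t (deviation n i t * success_prob n j t).
Proof.
apply: Rintegral_mul_eq_of_levels.
- exact: (bounded_measurable_deviation n i).1.
- exact: norm_deviation_le1.
- exact: bounded_measurable_I.
- exact: bounded_measurable_success_prob.
move=> K m; pose A := [set t | Num.floor (K * deviation n i t) == m].
have indicA t : (Num.floor (K * deviation n i t) == m)%:R = (t \in A)%:R :> R.
  have [h|h] := boolP (Num.floor (K * deviation n i t) == m).
    by rewrite mem_set.
  by rewrite memNset ?(negbTE h) //; exact/negP.
under eq_Rintegral do rewrite indicA; under [RHS]eq_Rintegral do rewrite indicA.
rewrite -!Rintegral_in_indicator.
apply: (@cond_indep_bernoulli_marginal _ _ _ P _ (natural_filtration Z n) (I n.+1)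
  (success_prob n)) => //.
- exact: natural_filtration_measurable.
- by move=> k; exact: (bounded_measurable_success_prob n k).1.
- exact: success_prob_ge0_le1.
- exact: natural_filtration_deviation_level.
Qed.

Lemma success_prob_sub_mean n i t :
  success_prob n i t - (\sum_(j < N) success_prob n j t) / N%:R = (1 - alpha) * deviation n i t.
Proof.
rewrite /success_prob big_split /= -!mulr_sumr sumr_const card_ord /deviation /zmean.
by rewrite -mulr_natr; field; rewrite pnatr_eq0 -lt0n.
Qed.

Lemma Rintegral_deviation_mul_innovation n i :
  \int[P]_t (deviation n i t * innovation n i t) =
  (1 - alpha) * \int[P]_t (deviation n i t ^+ 2).
Proof.
rewrite [LHS]Rintegral_mul_sub_mean //; last 2 first.
- exact: bounded_measurable_deviation.
- by move=> j; exact: bounded_measurable_I.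
under eq_bigr do rewrite Rintegral_deviation_mul_I.
rewrite Rintegral_deviation_mul_I -Rintegral_mul_sub_mean //; last 2 first.
- exact: bounded_measurable_deviation.
- exact: bounded_measurable_success_prob.
rewrite -RintegralZl //; last exact/bounded_measurable_integrable/bounded_measurable_sq_deviation.
by apply: eq_Rintegral => t _; rewrite success_prob_sub_mean; ring.
Qed.

Definition mean_sq_deviation n i := \int[P]_t (deviation n i t ^+ 2).

Lemma mean_sq_deviation_ge0_le1 n i : 0 <= mean_sq_deviation n i <= 1.
Proof.
apply/andP; split; first by apply: Rintegral_ge0 => t _; exact: sqr_ge0.
apply: le_trans (ler_norm _) _; apply: norm_Rintegral_le_bound.
  exact: bounded_measurable_sq_deviation.
by move=> t; rewrite normrX sqr_le1 ?normr_id // norm_deviation_le1.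
Qed.

Lemma mean_sq_deviation_rec_le n i :
  mean_sq_deviation n.+1 i <= (1 - r n) ^+ 2 * mean_sq_deviation n i
    + 2 * (1 - r n) * r n * (rho * (1 - alpha)) * mean_sq_deviation n i + r n ^+ 2.
Proof.
pose D := deviation n i; pose X := innovation n i.
have bDD := bounded_measurable_sq_deviation n i.
have bDX : bounded_measurable (fun t => D t * X t).
  exact: bounded_measurableM (bounded_measurable_deviation n i) (bounded_measurable_innovation n i).
have integ := bounded_measurable_integrable P.
pose c1 := (1 - r n) ^+ 2; pose c2 := 2 * (1 - r n) * r n * rho.
have bc (c : R) f : bounded_measurable f -> bounded_measurable (fun t => c * f t).
  exact/bounded_measurableM/bounded_measurable_cst.
have pointwise t : deviation n.+1 i t ^+ 2 <= c1 * D t ^+ 2 + c2 * (D t * X t) + r n ^+ 2.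
  rewrite deviation_rec -/D -/X [leLHS](_ : _ = c1 * D t ^+ 2 + c2 * (D t * X t)
    + r n ^+ 2 * (rho * X t) ^+ 2); last by rewrite /c1 /c2; ring.
  rewrite lerD2l -[leRHS]mulr1 ler_wpM2l ?sqr_ge0 // sqr_le1 //.
  exact: norm_rho_innovation_le1.
apply: le_trans (le_Rintegral _ (integ _ _) (integ _ _) (fun t _ => pointwise t)) _ => //.
- exact: bounded_measurable_sq_deviation.
- by apply/bounded_measurableD/bounded_measurable_cst; apply/bounded_measurableD; exact: bc.
rewrite !RintegralD //; try exact/integ/bc; last 2 first.
- by apply/integ; apply: bounded_measurableD; exact: bc.
- exact/integ/bounded_measurable_cst.
rewrite Rintegral_cst_probability !RintegralZl ?(integ _ bDX) ?(integ _ bDD) // /D /X.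
rewrite [X in c2 * X](Rintegral_deviation_mul_innovation n i) -/(mean_sq_deviation n i).
rewrite -[X in c1 * X]/(mean_sq_deviation n i) le_eqVlt; apply/orP; left.
by apply/eqP; rewrite /c1 /c2; ring.
Qed.

Lemma mean_sq_deviation_decrease n i :
  2 * (1 - rho * (1 - alpha)) * (r n * mean_sq_deviation n i) <=
  mean_sq_deviation n i - mean_sq_deviation n.+1 i + 2 * r n ^+ 2.
Proof.
have := mean_sq_deviation_rec_le n i; have /andP[v0 v1] := mean_sq_deviation_ge0_le1 n i.
have b0 : 0 <= rho * (1 - alpha).
  by case/andP: rho01 => ? _; case/andP: alpha01 => _ ?; rewrite mulr_ge0 ?subr_ge0.
move: (mean_sq_deviation n i) (mean_sq_deviation n.+1 i) (rho * (1 - alpha)) (r n) v0 v1 b0.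
move=> v w b x v0 v1 b0 w_le.
(* The claim exceeds the slack in [w_le] by exactly x^2 (1 - v + 2 b v). *)
have : 0 <= x ^+ 2 * (1 - v + 2 * b * v) by rewrite mulr_ge0 ?sqr_ge0 //; nra.
nra.
Qed.

Lemma sum_weighted_mean_sq_deviation_le i :
  (\sum_(0 <= n <oo) (r n ^+ 2)%:E < +oo)%E -> rho * (1 - alpha) < 1 ->
  exists C, forall m, \sum_(0 <= n < m) \int[P]_t (r n * deviation n i t ^+ 2) <= C.
Proof.
move=> r2fin contraction; set c := 1 - rho * (1 - alpha).
have c0 : 0 < c by rewrite subr_gt0.
set S := fine (\sum_(0 <= n <oo) (r n ^+ 2)%:E)%E.
exists ((1 + 2 * S) / (2 * c)) => m; rewrite ler_pdivlMr ?mulr_gt0 // mulrC mulr_sumr.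
apply: le_trans (_ : \sum_(0 <= n < m) (mean_sq_deviation n i - mean_sq_deviation n.+1 i
    + 2 * r n ^+ 2) <= _).
  apply: ler_sum => n _; rewrite RintegralZl //; first exact: mean_sq_deviation_decrease.
  exact/bounded_measurable_integrable/bounded_measurable_sq_deviation.
rewrite big_split /= -mulr_sumr; apply: lerD.
  rewrite -[X in X <= _]opprK -sumrN; under eq_bigr do rewrite opprB.
  rewrite telescope_sumr // opprB.
  have /andP[_ v0_le1] := mean_sq_deviation_ge0_le1 0 i.
  have /andP[vm_ge0 _] := mean_sq_deviation_ge0_le1 m i; lra.
rewrite ler_pM2l //; apply: sum_le_fine_nneseries => // n; exact: sqr_ge0.
Qed.

Lemma deviation_cvg0 i :
  (\sum_(0 <= n <oo) (r n)%:E = +oo)%E -> (\sum_(0 <= n <oo) (r n ^+ 2)%:E < +oo)%E ->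
  rho * (1 - alpha) < 1 ->
  {ae P, forall t, (fun n => deviation n i t) @ \oo --> 0}.
Proof.
move=> rinf r2fin contraction.
have : {ae P, forall t, (\sum_(0 <= n <oo) (r n * deviation n i t ^+ 2)%:E < +oo)%E}.
  apply: ae_nneseries_lt_pinfty => [n t|n|].
  - by rewrite mulr_ge0 ?sqr_ge0.
  - exact/bounded_measurableM/bounded_measurable_sq_deviation/bounded_measurable_cst.
  - exact: sum_weighted_mean_sq_deviation_le.
apply: filterS => t fin_t; apply: (cvg0_of_small_steps r_ge0 rinf r2fin _ fin_t).
by move=> n; exact: norm_deviation_step.
Qed.

End mean_field_model.

Unset Implicit Arguments.

Theorem theorem2p3 (d : measure_display) (T : measurableType d) (R : realType)
  (P : probability T R) (N : nat) (rho alpha q : R) (r : nat -> R)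
  (Z : nat -> 'I_N -> T -> R) (I : nat -> 'I_N -> T -> R) :
  (0 < N)%N ->
  0 <= rho <= 1 -> 0 <= alpha <= 1 -> 0 <= q <= 1 ->
  (forall n, 0 <= r n < 1) ->
  (forall n i, measurable_fun setT (Z n i)) ->
  (forall n i, measurable_fun setT (I n i)) ->
  (forall n i t, 0 <= Z n i t <= 1) ->
  (forall n i t, I n i t = 0 \/ I n i t = 1) ->
  (forall n i t, Z n.+1 i t
     = (1 - r n) * Z n i t + r n * (rho * I n.+1 i t + (1 - rho) * q)) ->
  (forall n, cond_indep_bernoulli P (natural_filtration Z n) (I n.+1)
     (fun i t => (1 - alpha) * Z n i t + alpha * zmean Z n t)) ->
  (\sum_(0 <= n <oo) (r n)%:E = +oo)%E ->
  (\sum_(0 <= n <oo) (r n ^+ 2)%:E < +oo)%E ->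
  rho * (1 - alpha) < 1 ->
  (forall i : 'I_N,
     {ae P, forall t, (fun n => Z n i t - zmean Z n t) @ \oo --> (0 : R)}) /\
  (forall Zlim : T -> R,
     {ae P, forall t, (fun n => zmean Z n t) @ \oo --> Zlim t} ->
     forall i : 'I_N, {ae P, forall t, (fun n => Z n i t) @ \oo --> Zlim t}).
Proof.
move=> N_gt0 rho01 alpha01 _ r01 mZ mI Z01 I01 Z_rec I_cond rinf r2fin contraction.
have r_ge0 n : 0 <= r n by case/andP: (r01 n).
have deviation0 i : {ae P, forall t, (fun n => Z n i t - zmean Z n t) @ \oo --> (0 : R)}.
  exact: (deviation_cvg0 N_gt0 rho01 alpha01 r_ge0 mZ mI Z01 I01 Z_rec I_cond i rinf r2fin).
split => // Zlim Zlim_cvg i; apply: filterS2 (deviation0 i) Zlim_cvg => t dev_t mean_t.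
rewrite -[Zlim t]add0r (_ : (fun n => Z n i t) = (fun n => Z n i t - zmean Z n t + zmean Z n t)).
  exact: cvgD.
by apply/funext => n; rewrite subrK.
Qed.
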